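(* Let $p$ be an odd prime, $x\in\mathbb Z_p$ and $x\not\equiv-1\pmod p$. Then $$P_{\frac{p-1}2}(x)\equiv\Big(\frac{2(x+1)}p\Big)P_{\frac{p-1}2}\Big(\frac{3-x}{1+x}\Big)\pmod p.$$
   Context: $\mathbb Z_p$ denotes the set of rational numbers whose denominator (in lowest terms) is prime to $p$; congruences are in this ring. $P_n(x)$ is the $n$-th Legendre polynomial, defined by $\frac1{\sqrt{1-2xt+t^2}}=\sum_{n\ge0}P_n(x)t^n$, equivalently $P_n(x)=\frac1{2^n}\sum_{k=0}^{[n/2]}\frac{(-1)^k(2n-2k)!}{k!(n-k)!(n-2k)!}x^{n-2k}$. For $a\in\mathbb Z_p$, $\big(\frac ap\big)$ is the Legendre symbol of the residue of $a$ modulo $p$. *)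

From mathcomp Require Import all_boot all_order all_algebra.
Set Implicit Arguments. Unset Strict Implicit. Unset Printing Implicit Defensive.
Import Order.TTheory GRing.Theory Num.Theory.
Local Open Scope ring_scope.

Definition in_Zp (p : nat) (x : rat) : bool := coprime `|denq x|%N p.

Definition congp (p : nat) (a b : rat) : bool := in_Zp p ((a - b) / p%:R).

Definition legendre_sym (p : nat) (a : rat) : rat :=
  if congp p a 0 then 0
  else if [exists r : 'I_p, congp p a ((nat_of_ord r)%:R ^+ 2)] then 1 else -1.

Definition legendreP (n : nat) (x : rat) : rat :=
  (2 ^+ n)^-1 * \sum_(0 <= k < (n./2).+1)
     ((-1) ^+ k * ((2 * n - 2 * k)`!)%:R
        / ((k`!)%:R * ((n - k)`!)%:R * ((n - 2 * k)`!)%:R) * x ^+ (n - 2 * k)).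

(* Write P_n(z) = 2^-n * sum_k C(n,k)^2 (z-1)^(n-k) (z+1)^k, the sum being the
   coefficient of t^n in (t+z-1)^n (t+z+1)^n.  For n = (p-1)/2 we have 2n+1 = 0
   in F_p, hence C(n+i,i) = (-1)^i C(n,i) there; expanding (t+a+2)^n around t+a
   turns the sum for the pair (a, a+2) into the sum for (-a, 2).  With a = x-1
   the pair (-a, 2) is (1+x)/2 times (y-1, y+1), y = (3-x)/(1+x), so by
   homogeneity P_n(x) = ((x+1)/2)^n P_n(y) in F_p.  Finally
   ((x+1)/2)^n = (2(x+1))^n because 4^n = 2^(p-1) = 1, and (2(x+1))^n is the
   Legendre symbol by Euler's criterion.  Congruences in Z_p are transported to
   F_p through the residue map. *)

From mathcomp Require Import all_boot all_algebra all_field.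
From mathcomp Require Import ring zify.
Import GRing.Theory Num.Theory.
Local Open Scope ring_scope.

Set Implicit Arguments. Unset Strict Implicit. Unset Printing Implicit Defensive.

Section BinomialSquareSum.
Variable R : comNzRingType.

Lemma coef_XaddC_exp (c : R) m j : (('X + c%:P) ^+ m)`_j = c ^+ (m - j) *+ 'C(m, j).
Proof.
elim: m j => [|m IHm] j.
  by rewrite expr0 coef1; case: j => [|j]; rewrite ?bin0 ?bin0n //= mulr0n.
rewrite exprSr mulrDr coefD coefMX coefMC; case: j => [|j] /=.
  by rewrite add0r IHm !subn0 !bin0 !mulr1n exprSr.
rewrite !IHm binS mulrnDr subSS; case: (ltnP j m) => hjm.
  by rewrite addrC mulrnAl -exprSr subnSK.
by rewrite (@bin_small m j.+1) ?ltnS // !mulr0n mul0r addr0 add0r.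
Qed.

Definition bin_sq_sum n (a b : R) : R :=
  \sum_(k < n.+1) a ^+ (n - k) * b ^+ k *+ 'C(n, k) ^ 2.

Lemma bin_sq_sum_coef n a b :
  bin_sq_sum n a b = (('X + a%:P) ^+ n * ('X + b%:P) ^+ n)`_n.
Proof.
rewrite coefM; apply: eq_bigr => -[k /=]; rewrite ltnS => lekn _.
by rewrite !coef_XaddC_exp subKn // bin_sub // mulrnAl mulrnAr -mulrnA mulnn.
Qed.

Lemma bin_sq_sum_scale n a b c : bin_sq_sum n (c * a) (c * b) = c ^+ n * bin_sq_sum n a b.
Proof.
rewrite mulr_sumr; apply: eq_bigr => -[k /=]; rewrite ltnS => lekn _.
have -> : c ^+ n = c ^+ (n - k) * c ^+ k by rewrite -exprD subnK.
by rewrite mulrnAr !exprMn; congr (_ *+ _); ring.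
Qed.

Lemma bin_sq_sum_sqr_sub1 n (z : R) :
  bin_sq_sum n (z - 1) (z + 1) =
  \sum_(0 <= k < (n./2).+1) (-1) ^+ k * z ^+ (n - 2 * k) *+ ('C(2 * n - 2 * k, n) * 'C(n, k)).
Proof.
rewrite bin_sq_sum_coef.
have -> : ('X + (z - 1)%:P) ^+ n * ('X + (z + 1)%:P) ^+ n = (('X + z%:P) ^+ 2 - 1) ^+ n.
  by rewrite -exprMn polyCB polyCD polyC1; congr (_ ^+ _); ring.
have le_half : ((n./2).+1 <= n.+1)%N by rewrite ltnS leq_half_double; lia.
rewrite exprBn coef_sum (big_nat_widen _ _ _ _ _ le_half) big_mkord [RHS]big_mkcond.
apply: eq_bigr => -[k /= ltkn] _.
have -> : (-1 : {poly R}) ^+ k = ((-1) ^+ k)%:P by rewrite polyC_exp polyCN.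
rewrite expr1n mulr1 -exprM coefMn coefCM coef_XaddC_exp.
case: ifP => [|/negbT]; rewrite ltnS ?geq_half_double -?ltnNge ?ltn_half_double -mul2n => hk.
  have -> : (2 * (n - k) - n = n - 2 * k)%N by lia.
  have -> : (2 * (n - k) = 2 * n - 2 * k)%N by lia.
  by rewrite mulrnAr -mulrnA.
by rewrite bin_small ?mulr0n ?mulr0 ?mul0rn //; lia.
Qed.

End BinomialSquareSum.

Definition legendre_form (F : fieldType) n (z : F) : F :=
  (2 ^+ n)^-1 * bin_sq_sum n (z - 1) (z + 1).

Lemma legendreP_form n (z : rat) : legendreP n z = legendre_form n z.
Proof.
rewrite /legendreP /legendre_form bin_sq_sum_sqr_sub1; congr (_ * _).
apply: eq_big_nat => k /andP [_]; rewrite ltnS geq_half_double -mul2n => hk.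
have fact_split : ((2 * n - 2 * k)`! =
    'C(2 * n - 2 * k, n) * 'C(n, k) * (k`! * (n - k)`! * (n - 2 * k)`!))%N.
  rewrite -(@bin_fact (2 * n - 2 * k) n); last by lia.
  have -> : (2 * n - 2 * k - n = n - 2 * k)%N by lia.
  by rewrite -(@bin_fact n k); [ring | lia].
have fact_neq0 m : (m`!)%:R != 0 :> rat by rewrite pnatr_eq0 -lt0n fact_gt0.
rewrite fact_split -mulr_natr !natrM; field.
by rewrite !fact_neq0.
Qed.

Section HalfCharacteristic.
Variables (F : fieldType) (n : nat).
Hypothesis pcharF : (n.*2.+1)%N \in [pchar F].

Lemma natr_half_neq0 i : (0 < i <= n)%N -> i%:R != 0 :> F.
Proof.
case/andP=> i_gt0 le_in; rewrite -(dvdn_pcharf pcharF).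
by apply/negP => /(dvdn_leq i_gt0); lia.
Qed.

Lemma bin_addn_pchar i : (i <= n)%N -> 'C(n + i, i)%:R = (-1) ^+ i * 'C(n, i)%:R :> F.
Proof.
elim: i => [|i IHi] lt_in; first by rewrite addn0 !bin0 expr0 mul1r.
apply: (mulfI (natr_half_neq0 (i := i.+1) _)); first by rewrite lt_in.
have opp_succ : (n + i).+1%:R = - (n - i)%:R :> F.
  apply/eqP; rewrite -subr_eq0 opprK -natrD.
  have -> : ((n + i).+1 + (n - i) = n.*2.+1)%N by rewrite -addnn; lia.
  by rewrite (pcharf0 pcharF).
rewrite addnS -natrM -(mul_bin_diag (n + i).+1 i) natrM /= IHi ?(ltnW lt_in) //.
by rewrite opp_succ [RHS]mulrCA -natrM mul_bin_left natrM exprS mulN1r !mulNr mulrCA.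
Qed.

Lemma bin_sq_sum_shift (t : F) : bin_sq_sum n t (t + 2) = bin_sq_sum n (- t) 2.
Proof.
rewrite [LHS]bin_sq_sum_coef.
have -> : 'X + (t + 2)%:P = ('X + t%:P) + 2%:P by rewrite polyCD addrA.
rewrite [(_ + 2%:P) ^+ n]exprDn mulr_sumr coef_sum; apply: eq_bigr => -[i /=]; rewrite ltnS => le_in _.
rewrite mulrnAr coefMn mulrA -exprD -polyC_exp coefMC coef_XaddC_exp addKn.
have -> : 'C(n + (n - i), n) = 'C(n + (n - i), n - i).
  by rewrite -[in RHS]bin_sub ?leq_addl // addnK.
rewrite -[_ *+ 'C(n + _, _)]mulr_natr bin_addn_pchar ?leq_subr // bin_sub //.
by rewrite -[_ *+ 'C(n, i)]mulr_natr -[_ *+ ('C(n, i) ^ 2)]mulr_natr natrX [(- t) ^+ _]exprNn; ring.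
Qed.

Lemma two_neq0_pchar : 2 != 0 :> F.
Proof.
rewrite -(dvdn_pcharf pcharF); apply/negP => /(dvdn_leq (isT : (0 < 2)%N)) le_2n1_2.
by have := pcharf_prime pcharF; have -> : n = 0%N by lia.
Qed.

Lemma expr2_double_pchar : 2 ^+ n.*2 = 1 :> F.
Proof.
apply: (mulfI two_neq0_pchar); rewrite mulr1 -exprS.
exact: (pFrobenius_aut_nat pcharF 2).
Qed.

Lemma legendre_form_mobius (z : F) : z + 1 != 0 ->
  legendre_form n z = (2 * (z + 1)) ^+ n * legendre_form n ((3 - z) / (1 + z)).
Proof.
move=> z1_neq0; have z1_neq0' : 1 + z != 0 by rewrite addrC.
rewrite /legendre_form; set c := 2 / (1 + z).
have -> : (3 - z) / (1 + z) - 1 = c * - (z - 1) by rewrite /c; field.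
have -> : (3 - z) / (1 + z) + 1 = c * 2 by rewrite /c; field.
have shift : bin_sq_sum n (- (z - 1)) 2 = bin_sq_sum n (z - 1) (z + 1).
  by rewrite -bin_sq_sum_shift; congr bin_sq_sum; ring.
have four_exp : (2 * (z + 1)) ^+ n * c ^+ n = 1.
  rewrite -exprMn (_ : 2 * (z + 1) * c = 2 ^+ 2); last by rewrite /c; field.
  by rewrite -exprM mul2n expr2_double_pchar.
by rewrite bin_sq_sum_scale shift [RHS]mulrCA; congr (_ * _); rewrite mulrA four_exp mul1r.
Qed.

End HalfCharacteristic.

(* [reduces p x u]: x lies in Z_p and its residue modulo p is u. *)
Definition reduces (p : nat) (x : rat) (u : 'F_p) : Prop :=
  exists a b : int, [/\ b%:~R != 0 :> 'F_p, x = a%:~R / b%:~R & u = a%:~R / b%:~R].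
Arguments reduces : clear implicits.

Section ReductionModp.
Context {p : nat}.
Hypothesis p_pr : prime p.
Local Notation F := 'F_p.

Lemma intr_Fp_eq0 (m : int) : (m%:~R == 0 :> F) = (p %| `|m|)%N.
Proof.
rewrite [m in LHS]intEsign intrM mulf_eq0 intr_sign signr_eq0 /=.
by rewrite (dvdn_pcharf (pchar_Fp p_pr)).
Qed.

Lemma in_ZpE x : in_Zp p x = ((denq x)%:~R != 0 :> F).
Proof. by rewrite /in_Zp coprime_sym prime_coprime // intr_Fp_eq0. Qed.

Lemma intr_neq0_of_Fp (b : int) : b%:~R != 0 :> F -> b%:~R != 0 :> rat.
Proof. by apply: contraNneq => /eqP; rewrite intr_eq0 => /eqP ->. Qed.

Lemma reduces_unique x u v : reduces p x u -> reduces p x v -> u = v.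
Proof.
move=> [a [b [b_neq0 -> ->]]] [c [d [d_neq0 eq_x ->]]].
have eq_int : a * d = c * b.
  apply/eqP; rewrite -(eqr_int rat) !intrM -eqr_div ?intr_neq0_of_Fp //.
  exact/eqP.
apply/eqP; rewrite eqr_div // -!intrM; exact/eqP/(congr1 intr eq_int).
Qed.

Lemma in_Zp_reduces x : in_Zp p x -> exists u, reduces p x u.
Proof.
rewrite in_ZpE => den_neq0.
by exists ((numq x)%:~R / (denq x)%:~R), (numq x), (denq x); rewrite divq_num_den.
Qed.

Lemma reduces_in_Zp x u : reduces p x u -> in_Zp p x.
Proof.
move=> [a [b [b_neq0 eq_x _]]]; rewrite in_ZpE; apply/negP => /eqP den0.
have eq_int : numq x * b = a * denq x.
  apply/eqP; rewrite -(eqr_int rat) !intrM numqE eq_x mulrAC divfK ?intr_neq0_of_Fp //.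
have /eqP : (numq x * b)%:~R = 0 :> F by rewrite eq_int intrM den0 mulr0.
rewrite intrM mulf_eq0 (negbTE b_neq0) orbF intr_Fp_eq0 => p_num.
move/eqP: den0; rewrite intr_Fp_eq0 => p_den.
have := coprime_num_den x; rewrite /coprime => /eqP gcd1.
have : (p %| gcdn `|numq x| `|denq x|)%N by rewrite dvdn_gcd p_num p_den.
by rewrite gcd1 dvdn1 => /eqP p1; move: p_pr; rewrite p1.
Qed.

Lemma reduces_int (m : int) : reduces p m%:~R m%:~R.
Proof. by exists m, 1; rewrite !divr1 oner_eq0. Qed.

Lemma reduces_nat (m : nat) : reduces p m%:R m%:R.
Proof. exact: (reduces_int m). Qed.

Lemma reduces1 : reduces p 1 1.
Proof. exact: (reduces_nat 1). Qed.

Lemma reducesN x u : reduces p x u -> reduces p (- x) (- u).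
Proof. by move=> [a [b [b_neq0 -> ->]]]; exists (- a), b; rewrite !intrN !mulNr. Qed.

Lemma reducesD x y u v : reduces p x u -> reduces p y v -> reduces p (x + y) (u + v).
Proof.
move=> [a [b [b_neq0 -> ->]]] [c [d [d_neq0 -> ->]]].
exists (a * d + c * b), (b * d); rewrite !intrD !intrM mulf_neq0 //.
by split=> //; field; rewrite ?intr_neq0_of_Fp ?b_neq0 ?d_neq0.
Qed.

Lemma reducesM x y u v : reduces p x u -> reduces p y v -> reduces p (x * y) (u * v).
Proof.
move=> [a [b [b_neq0 -> ->]]] [c [d [d_neq0 -> ->]]].
exists (a * c), (b * d); rewrite !intrM mulf_neq0 //.
by split=> //; field; rewrite ?intr_neq0_of_Fp ?b_neq0 ?d_neq0.
Qed.

Lemma reducesV x u : reduces p x u -> u != 0 -> reduces p x^-1 u^-1.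
Proof.
move=> [a [b [b_neq0 -> ->]]]; rewrite mulf_eq0 invr_eq0 (negbTE b_neq0) orbF => a_neq0.
by exists b, a; rewrite !invf_div.
Qed.

Lemma reducesB x y u v : reduces p x u -> reduces p y v -> reduces p (x - y) (u - v).
Proof. by move=> Rx /reducesN; apply: reducesD. Qed.

Lemma reducesX x u m : reduces p x u -> reduces p (x ^+ m) (u ^+ m).
Proof.
move=> Rx; elim: m => [|m IHm]; first by rewrite !expr0; apply: reduces1.
by rewrite !exprS; apply: reducesM.
Qed.

Lemma reducesMn x u m : reduces p x u -> reduces p (x *+ m) (u *+ m).
Proof. by rewrite -mulr_natr -[u *+ m]mulr_natr => /reducesM; apply; apply: reduces_nat. Qed.

Lemma reduces_sum m (f : 'I_m -> rat) (g : 'I_m -> F) :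
  (forall i, reduces p (f i) (g i)) -> reduces p (\sum_(i < m) f i) (\sum_(i < m) g i).
Proof.
move=> Rfg; apply: (big_rec2 (reduces p)); first exact: (reduces_nat 0).
by move=> i x u _; apply: reducesD.
Qed.

Lemma congp_reduces x y u v : reduces p x u -> reduces p y v -> congp p x y = (u == v).
Proof.
move=> Rx Ry; have Rxy := reducesB Rx Ry; have p_neq0 : p%:R != 0 :> rat.
  by rewrite pnatr_eq0 -lt0n prime_gt0.
apply/idP/eqP => [/in_Zp_reduces [w Rw] | eq_uv].
  have := reducesM Rw (reduces_nat p); rewrite divfK // pchar_Fp_0 // mulr0.
  by move/(reduces_unique Rxy)/eqP; rewrite subr_eq0 => /eqP.
move: Rxy; rewrite eq_uv subrr => -[a [b [b_neq0 eq_xy /esym/eqP]]].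
rewrite mulf_eq0 invr_eq0 (negbTE b_neq0) orbF intr_Fp_eq0 => p_a.
apply: (@reduces_in_Zp _ ((a %/ p)%Z%:~R / b%:~R)); exists (a %/ p)%Z, b; split=> //.
rewrite eq_xy -{1}(divzK (p_a : (p%:Z %| a)%Z)) intrM; field.
by rewrite intr_neq0_of_Fp.
Qed.

End ReductionModp.

Section EulerCriterion.
Variable p : nat.
Hypotheses (p_pr : prime p) (p_odd : odd p).
Local Notation F := 'F_p.
Local Notation n := p.-1./2.

Lemma half_pred_double : n.*2 = p.-1.
Proof. by rewrite even_halfK // -oddS prednK ?prime_gt0. Qed.

Lemma fermat_Fp (u : F) : u != 0 -> u ^+ p.-1 = 1.
Proof.
move=> u_neq0; apply: (mulfI u_neq0); rewrite mulr1 -exprS prednK ?prime_gt0 //.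
by have := expf_card u; rewrite card_Fp.
Qed.

Lemma natr_Fp_neq0 i : (0 < i < p)%N -> i%:R != 0 :> F.
Proof.
case/andP=> i_gt0 lt_ip; rewrite -(dvdn_pcharf (pchar_Fp p_pr)).
by apply/negP => /(dvdn_leq i_gt0); lia.
Qed.

Lemma natr_Fp_inj i j : (i < p)%N -> (j < p)%N -> i%:R = j%:R :> F -> i = j.
Proof.
move=> lt_ip lt_jp eq_ij; have := val_Fp_nat p_pr i.
by rewrite eq_ij val_Fp_nat // !modn_small.
Qed.

Lemma uniq_half_squares : uniq [seq i%:R ^+ 2 : F | i <- iota 1 n].
Proof.
have lt_np : (n.*2 < p)%N by rewrite half_pred_double prednK ?prime_gt0.
rewrite map_inj_in_uniq ?iota_uniq // => i j; rewrite !mem_iota => le_i le_j /eqP.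
rewrite -subr_eq0 subr_sqr mulf_eq0 subr_eq0 -natrD => /orP [/eqP|].
  by apply: natr_Fp_inj; rewrite -mul2n in lt_np; lia.
by rewrite (negbTE (natr_Fp_neq0 _)) //; rewrite -mul2n in lt_np; lia.
Qed.

Lemma nonsquare_expr_half (u : F) :
  u != 0 -> (forall r : 'I_p, u != r%:R ^+ 2) -> u ^+ n != 1.
Proof.
move=> u_neq0 nonsq; apply/negP => /eqP un1.
(* u, 1^2, ..., n^2 would be n + 1 distinct roots of X^n - 1. *)
have lt_np : (n.*2 < p)%N by rewrite half_pred_double prednK ?prime_gt0.
have n_gt0 : (0 < n)%N.
  by rewrite -double_gt0 half_pred_double -ltnS prednK ?prime_gt0 ?prime_gt1.
pose squares := [seq i%:R ^+ 2 : F | i <- iota 1 n].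
suff : (size (u :: squares) < size ('X^n - 1%:P : {poly F})%R)%N.
  by rewrite size_XnsubC //= size_map size_iota ltnn.
apply: max_poly_roots; first by rewrite -size_poly_eq0 size_XnsubC.
  rewrite /= rootE !hornerE un1 subrr eqxx /=; apply/allP => w /mapP [i].
  rewrite mem_iota => le_i ->; rewrite rootE !hornerE -exprM mul2n half_pred_double.
  by rewrite fermat_Fp ?subrr // natr_Fp_neq0 //; rewrite -mul2n in lt_np; lia.
rewrite /= uniq_half_squares andbT; apply/mapP => -[i]; rewrite mem_iota => le_i eq_u.
have lt_ip : (i < p)%N by rewrite -mul2n in lt_np; lia.
by have := nonsq (Ordinal lt_ip); rewrite eq_u eqxx.
Qed.

Lemma euler_criterion (u : F) : u != 0 ->
  (if [exists r : 'I_p, u == r%:R ^+ 2] then 1 else -1) = u ^+ n.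
Proof.
move=> u_neq0; case: ifPn => [/existsP [r /eqP eq_u] | ].
  have r_neq0 : r%:R != 0 :> F by apply: contraNneq u_neq0 => r0; rewrite eq_u r0 expr0n.
  by rewrite eq_u -exprM mul2n half_pred_double fermat_Fp.
rewrite negb_exists => /forallP nonsq.
have /eqP : (u ^+ n) ^+ 2 = 1 by rewrite -exprM mulnC mul2n half_pred_double fermat_Fp.
rewrite sqrf_eq1 => /orP [un1 | /eqP -> //].
by case/negP: (nonsquare_expr_half u_neq0 nonsq).
Qed.

End EulerCriterion.

Section LegendreModp.
Variable p : nat.
Hypotheses (p_pr : prime p) (p_odd : odd p).
Local Notation n := p.-1./2.

Lemma pchar_Fp_half : n.*2.+1 \in [pchar 'F_p].
Proof. by rewrite half_pred_double // prednK ?prime_gt0 // pchar_Fp. Qed.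

Lemma reduces_legendreP m z (u : 'F_p) :
  reduces p z u -> reduces p (legendreP m z) (legendre_form m u).
Proof.
move=> Rzu; rewrite legendreP_form; apply: reducesM.
  apply: reducesV; first exact: reducesX _ (reduces_nat 2).
  by rewrite expf_neq0 // (two_neq0_pchar pchar_Fp_half).
apply: reduces_sum => k; apply/reducesMn/reducesM; apply: reducesX.
  exact: reducesB Rzu reduces1.
exact: reducesD Rzu reduces1.
Qed.

Lemma reduces_legendre_sym a (u : 'F_p) :
  reduces p a u -> u != 0 -> reduces p (legendre_sym p a) (u ^+ n).
Proof.
move=> Rau u_neq0; rewrite /legendre_sym (congp_reduces p_pr Rau (reduces_nat 0)).
rewrite (negbTE u_neq0) -euler_criterion //.
have -> : [exists r : 'I_p, congp p a (r%:R ^+ 2)] = [exists r : 'I_p, u == r%:R ^+ 2].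
  by apply: eq_existsb => r; rewrite (congp_reduces p_pr Rau (reducesX 2 (reduces_nat r))).
by case: ifP => _; [exact: reduces1 | exact: reducesN reduces1].
Qed.

End LegendreModp.

Theorem theorem2p6 (p : nat) (x : rat) :
  prime p -> odd p -> in_Zp p x -> ~~ congp p x (-1) ->
  congp p (legendreP p.-1./2 x)
    (legendre_sym p (2 * (x + 1)) * legendreP p.-1./2 ((3 - x) / (1 + x))).
Proof.
move=> p_pr p_odd x_Zp x_neq_m1; have [u Rxu] := in_Zp_reduces p_pr x_Zp.
have R1 := @reduces1 p; have R2 := @reduces_nat p 2.
have u1_neq0 : u + 1 != 0.
  by move: x_neq_m1; rewrite (congp_reduces p_pr Rxu (reducesN R1)) -subr_eq0 opprK.
have R_mobius : reduces p ((3 - x) / (1 + x)) ((3 - u) / (1 + u)).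
  apply: reducesM (reducesB (reduces_nat 3) Rxu) (reducesV (reducesD R1 Rxu) _).
  by rewrite addrC.
have R_sym := reduces_legendre_sym p_pr p_odd (reducesM R2 (reducesD Rxu R1)).
rewrite (congp_reduces p_pr (reduces_legendreP p_pr p_odd _ Rxu)
  (reducesM (R_sym _) (reduces_legendreP p_pr p_odd _ R_mobius))).
  by rewrite -legendre_form_mobius ?pchar_Fp_half.
by rewrite mulf_neq0 ?(two_neq0_pchar (pchar_Fp_half p_pr p_odd)).
Qed.
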